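(* Let $t\ge1$, $k\ge t$, and let $v_1,v_2,\eta,\mu$ be positive integers such that there exist $\mu$ pairwise compatible simple COA$_\eta(t,k,v_2)$'s. Suppose there are non-negative integers $m_1,\dots,m_r$ and positive integers $\mu_1,\dots,\mu_r,\lambda_1,\dots,\lambda_r$ such that (1) $m_1\mu_1+\cdots+m_r\mu_r\le\mu$, and (2) for each $1\le i\le r$ a $\mu_i$-row-divisible COA$_{\lambda_i}(t,k,v_1)$ exists. Then a simple COA$_{\eta(m_1\lambda_1+\cdots+m_r\lambda_r)}(t,k,v_1v_2)$ exists (provided $m_1\lambda_1+\cdots+m_r\lambda_r\ge1$).
   Context: A COA$_\lambda(t,k,v)$ is a $\lambda v^t\times k$ array over a $v$-set $V$ in which every set of $t$ consecutive columns contains every $t$-tuple exactly $\lambda$ times as a row. An array (not necessarily a COA) has the simple property if for any two distinct sets of $t$ consecutive columns sharing exactly $i$ columns ($0\le i\le t-1$), the subarray on the $2t-i$ columns of their union contains each $(2t-i)$-tuple at most once as a row; a simple COA is a COA with this property. A COA$_\lambda(t,k,v)$ is $\mu$-row-divisible if its rows can be partitioned into $\mu$ subarrays each having the simple property. Two simple COAs over the same symbol set are compatible if the array obtained by stacking all rows of both (their superimposition) is a simple COA; a family of simple COAs over the same symbol set is compatible if its members are pairwise compatible. *)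

From mathcomp Require Import all_boot.
Set Implicit Arguments. Unset Strict Implicit. Unset Printing Implicit Defensive.

Definition row (k v : nat) := {ffun 'I_k -> 'I_v}.
Definition array (k v : nat) := seq (row k v).

Definition inwin (t s : nat) (c : nat) : bool := (s <= c) && (c < s + t).

Definition matches_win (t k v : nat) (s : nat) (x : {ffun 'I_t -> 'I_v})
  (r : row k v) : bool :=
  [forall j : 'I_t, forall c : 'I_k, (val c == s + val j) ==> (r c == x j)].

Definition is_COA (lam t k v : nat) (A : array k v) : Prop :=
  size A = lam * v ^ t /\
  forall s : nat, s + t <= k ->
    forall x : {ffun 'I_t -> 'I_v}, count (matches_win s x) A = lam.

Definition agree_union (t k v : nat) (s1 s2 : nat) (r1 r2 : row k v) : bool :=
  [forall c : 'I_k, (inwin t s1 c || inwin t s2 c) ==> (r1 c == r2 c)].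

(* A tuple on the union is represented by any full row extending it. *)
Definition simple_prop (t k v : nat) (A : array k v) : Prop :=
  forall s1 s2 : nat, s1 + t <= k -> s2 + t <= k -> s1 <> s2 ->
    forall y : row k v, count (fun r => agree_union t s1 s2 r y) A <= 1.

Definition simple_COA (lam t k v : nat) (A : array k v) : Prop :=
  is_COA lam t A /\ simple_prop t A.

Definition row_divisible (mu lam t k v : nat) (A : array k v) : Prop :=
  is_COA lam t A /\
  exists parts : seq (array k v),
    [/\ size parts = mu, perm_eq (flatten parts) A,
        all (fun P => size P != 0) parts &
        forall P, P \in parts -> simple_prop t P].

Definition compatible (eta t k v : nat) (A B : array k v) : Prop :=
  simple_COA (2 * eta) t (A ++ B).

From mathcomp Require Import all_boot zify.
Set Implicit Arguments. Unset Strict Implicit. Unset Printing Implicit Defensive.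

(* Identify the symbol set 'I_(v1 * v2) with pairs of symbols 'I_v1 * 'I_v2,
   so that a row p over v1 and a row q over v2 combine columnwise into a row
   (p, q) over v1 * v2.  A window / union condition on (p, q) splits into the
   same condition on p and on q, so counts in the product P x C of two arrays
   multiply.  Given a list of pairs (P_j, C_j) we superimpose the products
   P_j x C_j.  If the P_j are simple and together form a COA_L(t,k,v1), and
   the C_j are distinct members of a pairwise compatible family of simple
   COA_eta(t,k,v2), then the superimposition is a simple COA_(eta L)(t,k,v1 v2):
   indices multiply, and a union-tuple can only reappear inside one P_j x C_j
   through a repeated union-tuple of the superimposition of the C_j, which is
   simple by compatibility.
   For the theorem, the simple parts of m_i copies of a mu_i-row-divisible
   COA_(lam_i) give sum m_i mu_i <= mu simple arrays forming a COA_L with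
   L = sum m_i lam_i, and each is paired with its own member of the family. *)

(* Boolean quantifiers and implications distribute over conjunction; this is
   how a condition on a paired row splits into its two coordinates. *)
Lemma forall_andb (T : finType) (P Q : pred T) :
  [forall x, P x && Q x] = [forall x, P x] && [forall x, Q x].
Proof.
apply/forallP/andP => [H|[/forallP HP /forallP HQ] x]; last by rewrite HP HQ.
by split; apply/forallP => x; case/andP: (H x).
Qed.

Lemma implyb_andr (a b c : bool) : (a ==> b && c) = (a ==> b) && (a ==> c).
Proof. by case: a. Qed.

Section SymbolPairs.
Variables v1 v2 : nat.

Lemma card_symbol_pairs : #|{: 'I_v1 * 'I_v2}| = v1 * v2.
Proof. by rewrite card_prod !card_ord. Qed.

Definition encode (ab : 'I_v1 * 'I_v2) : 'I_(v1 * v2) :=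
  cast_ord card_symbol_pairs (enum_rank ab).

Definition decode (z : 'I_(v1 * v2)) : 'I_v1 * 'I_v2 :=
  enum_val (cast_ord (esym card_symbol_pairs) z).

Lemma encodeK : cancel encode decode.
Proof. by move=> ab; rewrite /decode /encode cast_ordK enum_rankK. Qed.

Lemma decodeK : cancel decode encode.
Proof. by move=> z; rewrite /decode /encode enum_valK cast_ordKV. Qed.

Lemma encode_eq (a : 'I_v1) (b : 'I_v2) z :
  (encode (a, b) == z) = (a == (decode z).1) && (b == (decode z).2).
Proof. by rewrite (can2_eq encodeK decodeK) -xpair_eqE. Qed.

Definition fst_fun (I : finType) (x : {ffun I -> 'I_(v1 * v2)}) :
  {ffun I -> 'I_v1} := [ffun j => (decode (x j)).1].
Definition snd_fun (I : finType) (x : {ffun I -> 'I_(v1 * v2)}) :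
  {ffun I -> 'I_v2} := [ffun j => (decode (x j)).2].

Variable k : nat.

Definition pair_row (p : row k v1) (q : row k v2) : row k (v1 * v2) :=
  [ffun c => encode (p c, q c)].

Definition product_array (P : array k v1) (C : array k v2) : array k (v1 * v2) :=
  [seq pair_row p q | p <- P, q <- C].

Lemma pair_row_eq p q c z :
  (pair_row p q c == z) = (p c == (decode z).1) && (q c == (decode z).2).
Proof. by rewrite ffunE encode_eq. Qed.

Lemma matches_pair_row t s (x : {ffun 'I_t -> 'I_(v1 * v2)}) p q :
  matches_win s x (pair_row p q) =
  matches_win s (fst_fun x) p && matches_win s (snd_fun x) q.
Proof.
rewrite /matches_win -forall_andb; apply: eq_forallb => j.
rewrite -forall_andb; apply: eq_forallb => c.
by rewrite pair_row_eq !ffunE implyb_andr.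
Qed.

Lemma agree_pair_row t s1 s2 y p q :
  agree_union t s1 s2 (pair_row p q) y =
  agree_union t s1 s2 p (fst_fun y) && agree_union t s1 s2 q (snd_fun y).
Proof.
rewrite /agree_union -forall_andb; apply: eq_forallb => c.
by rewrite pair_row_eq !ffunE implyb_andr.
Qed.

Lemma count_product_array (a : pred (row k (v1 * v2))) a1 a2 P C :
  (forall p q, a (pair_row p q) = a1 p && a2 q) ->
  count a (product_array P C) = count a1 P * count a2 C.
Proof.
move=> a_split; elim: P => //= p P IH.
rewrite /product_array allpairs_cons count_cat -/(product_array P C) IH.
rewrite count_map mulnDl (eq_count (a_split p)); congr (_ + _).
by case: (a1 p); rewrite ?mul1n ?mul0n //; elim: {IH}C.
Qed.

Definition product_blocks (PCs : seq (array k v1 * array k v2)) :=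
  flatten [seq product_array PC.1 PC.2 | PC <- PCs].

Lemma count_product_blocks (a : pred (row k (v1 * v2))) a1 a2 c PCs :
  (forall p q, a (pair_row p q) = a1 p && a2 q) ->
  (forall PC, PC \in PCs -> count a2 PC.2 = c) ->
  count a (product_blocks PCs) = count a1 (flatten (unzip1 PCs)) * c.
Proof.
move=> a_split; elim: PCs => //= PC PCs IH countC.
rewrite count_cat (count_product_array _ _ a_split) countC ?mem_head //.
by rewrite IH ?count_cat ?mulnDl // => PC' inPC'; rewrite countC // inE inPC' orbT.
Qed.

Lemma count_product_blocks_le (a : pred (row k (v1 * v2))) a1 a2 PCs :
  (forall p q, a (pair_row p q) = a1 p && a2 q) ->
  (forall PC, PC \in PCs -> count a1 PC.1 <= 1) ->
  count a (product_blocks PCs) <= count a2 (flatten (unzip2 PCs)).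
Proof.
move=> a_split; elim: PCs => //= PC PCs IH countP.
rewrite !count_cat (count_product_array _ _ a_split) leq_add //.
  by rewrite -[X in _ <= X]mul1n leq_mul // countP ?mem_head.
by apply: IH => PC' inPC'; rewrite countP // inE inPC' orbT.
Qed.

Lemma is_COA_product_blocks t L eta PCs :
  is_COA L t (flatten (unzip1 PCs)) ->
  (forall PC, PC \in PCs -> is_COA eta t PC.2) ->
  is_COA (L * eta) t (product_blocks PCs).
Proof.
move=> [sizeP countP] coaC; split.
  rewrite -!count_predT (@count_product_blocks _ predT predT (eta * v2 ^ t)) //.
    by rewrite count_predT sizeP expnMn mulnACA.
  by move=> PC /coaC [sizeC _]; rewrite count_predT.
move=> s win x; rewrite (@count_product_blocks _ _ _ eta _ (matches_pair_row s x)).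
  by rewrite countP.
by move=> PC /coaC [_ countC]; exact: countC.
Qed.

Lemma simple_prop_product_blocks t PCs :
  (forall PC, PC \in PCs -> simple_prop t PC.1) ->
  simple_prop t (flatten (unzip2 PCs)) ->
  simple_prop t (product_blocks PCs).
Proof.
move=> simpleP simpleC s1 s2 win1 win2 s12 y.
apply: leq_trans (simpleC s1 s2 win1 win2 s12 (snd_fun y)).
apply: count_product_blocks_le => [p q|PC inPC]; first exact: agree_pair_row.
exact: simpleP.
Qed.

End SymbolPairs.

Lemma sum_pairwise_le1 (I : eqType) (f : I -> nat) (s : seq I) :
  (forall i, f i <= 1) -> (forall i j, i != j -> f i + f j <= 1) ->
  uniq s -> \sum_(i <- s) f i <= 1.
Proof.
move=> f_le1 pair_le1; elim: s => [|i s IH]; first by rewrite big_nil.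
case/andP=> i_notin uniq_s; rewrite big_cons.
have [fi0|fi_pos] := posnP (f i); first by rewrite fi0 IH.
suff -> : \sum_(j <- s) f j = 0 by rewrite addn0.
rewrite big1_seq // => j /andP[_ js].
have ij : i != j by apply: contraNneq i_notin => ->.
have := pair_le1 i j ij; lia.
Qed.

Lemma simple_prop_superimpose (I : eqType) t k v (fam : I -> array k v)
    (idx : seq I) :
  (forall i, simple_prop t (fam i)) ->
  (forall i j, i != j -> simple_prop t (fam i ++ fam j)) ->
  uniq idx -> simple_prop t (flatten (map fam idx)).
Proof.
move=> simple_fam simple_pairs uniq_idx s1 s2 win1 win2 s12 y.
rewrite count_flatten -map_comp sumnE big_map.
apply: sum_pairwise_le1 uniq_idx => [i|i j ij]; first exact: simple_fam.
by rewrite -count_cat; apply: simple_pairs.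
Qed.

Section SimplePartitions.
Variables t k v : nat.

Lemma is_COA_cat L1 L2 (A1 A2 : array k v) :
  is_COA L1 t A1 -> is_COA L2 t A2 -> is_COA (L1 + L2) t (A1 ++ A2).
Proof.
move=> [size1 count1] [size2 count2]; split.
  by rewrite size_cat size1 size2 mulnDl.
by move=> s win x; rewrite count_cat count1 // count2.
Qed.

Lemma is_COA_perm L (A1 A2 : array k v) :
  perm_eq A1 A2 -> is_COA L t A1 -> is_COA L t A2.
Proof.
move=> perm12 [size1 count1]; split; first by rewrite -(perm_size perm12).
by move=> s win x; rewrite -(permP perm12) count1.
Qed.

Definition simple_partition (n L : nat) (Ps : seq (array k v)) : Prop :=
  [/\ size Ps = n, is_COA L t (flatten Ps) & forall P, P \in Ps -> simple_prop t P].

Lemma row_divisible_partition mu lam (A : array k v) :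
  row_divisible mu lam t A -> exists Ps, simple_partition mu lam Ps.
Proof.
move=> [coaA [Ps [sizePs permA _ simplePs]]]; exists Ps; split=> //.
by apply: is_COA_perm coaA; rewrite perm_sym.
Qed.

Lemma simple_partition_cat n1 n2 L1 L2 Ps1 Ps2 :
  simple_partition n1 L1 Ps1 -> simple_partition n2 L2 Ps2 ->
  simple_partition (n1 + n2) (L1 + L2) (Ps1 ++ Ps2).
Proof.
move=> [size1 coa1 simple1] [size2 coa2 simple2]; split.
- by rewrite size_cat size1 size2.
- by rewrite flatten_cat; apply: is_COA_cat.
- by move=> P; rewrite mem_cat => /orP[/simple1|/simple2].
Qed.

Lemma simple_partition_nil : simple_partition 0 0 [::].
Proof. by split=> //; split=> // s win x; rewrite mul0n. Qed.

Lemma simple_partition_repeat c n L Ps :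
  simple_partition n L Ps -> simple_partition (c * n) (c * L) (flatten (nseq c Ps)).
Proof.
move=> part; elim: c => [|c IH]; first exact: simple_partition_nil.
by rewrite !mulSn; apply: simple_partition_cat.
Qed.

Lemma simple_partition_sum (I : Type) (s : seq I) (n L : I -> nat) :
  (forall i, exists Ps, simple_partition (n i) (L i) Ps) ->
  exists Ps, simple_partition (\sum_(i <- s) n i) (\sum_(i <- s) L i) Ps.
Proof.
move=> part_i; elim: s => [|i s [Ps partPs]].
  by exists [::]; rewrite !big_nil; exact: simple_partition_nil.
have [Pi partPi] := part_i i.
by exists (Pi ++ Ps); rewrite !big_cons; apply: simple_partition_cat.
Qed.

End SimplePartitions.

Lemma simple_COA_of_partition t k v1 v2 eta mu n L
    (fam : 'I_mu -> array k v2) (Ps : seq (array k v1)) :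
  (forall i, simple_COA eta t (fam i)) ->
  (forall i j, i != j -> compatible eta t (fam i) (fam j)) ->
  n <= mu -> simple_partition t n L Ps ->
  exists B : array k (v1 * v2), simple_COA (eta * L) t B.
Proof.
move=> simple_fam compat n_le_mu [sizePs coaPs simplePs].
set idx := take n (enum 'I_mu).
have size_idx : size idx = size Ps by rewrite size_takel ?size_enum_ord ?sizePs.
set PCs := zip Ps (map fam idx).
have unzip1_PCs : unzip1 PCs = Ps by rewrite unzip1_zip // size_map size_idx.
have unzip2_PCs : unzip2 PCs = map fam idx by rewrite unzip2_zip // size_map size_idx.
have fam_PCs PC : PC \in PCs -> exists i, PC.2 = fam i.
  move=> inPC; have : PC.2 \in unzip2 PCs by apply: map_f.
  by rewrite unzip2_PCs => /mapP [i _ ->]; exists i.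
exists (product_blocks PCs); rewrite mulnC; split.
- apply: is_COA_product_blocks; first by rewrite unzip1_PCs.
  by move=> PC /fam_PCs [i ->]; case: (simple_fam i).
- apply: simple_prop_product_blocks.
    move=> PC inPC; apply: simplePs.
    by rewrite -unzip1_PCs; apply: map_f.
  rewrite unzip2_PCs; apply: simple_prop_superimpose.
  + by move=> i; case: (simple_fam i).
  + by move=> i j ij; case: (compat i j ij).
  + exact/take_uniq/enum_uniq.
Qed.

Theorem mainTheorem13 (t k v1 v2 eta mu r : nat)
  (m mu_ lam : 'I_r -> nat) :
  1 <= t -> t <= k -> 0 < v1 -> 0 < v2 -> 0 < eta -> 0 < mu ->
  (exists fam : 'I_mu -> array k v2,
     (forall i, simple_COA eta t (fam i)) /\
     (forall i j, i != j -> compatible eta t (fam i) (fam j))) ->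
  (forall i, 0 < mu_ i) -> (forall i, 0 < lam i) ->
  \sum_(i < r) m i * mu_ i <= mu ->
  (forall i, exists A : array k v1, row_divisible (mu_ i) (lam i) t A) ->
  1 <= \sum_(i < r) m i * lam i ->
  exists B : array k (v1 * v2),
    simple_COA (eta * \sum_(i < r) m i * lam i) t B.
Proof.
move=> _ _ _ _ _ _ [fam [simple_fam compat]] _ _ sum_le_mu row_div _.
have part_i i : exists Ps,
    simple_partition t (m i * mu_ i) (m i * lam i) (Ps : seq (array k v1)).
  have [A /row_divisible_partition [Ps partPs]] := row_div i.
  by exists (flatten (nseq (m i) Ps)); apply: simple_partition_repeat.
have [Ps partPs] := simple_partition_sum (index_enum 'I_r) part_i.
exact (simple_COA_of_partition simple_fam compat sum_le_mu partPs).
Qed.
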